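(* Let $n\geq1$, $d\geq 2$, and let $F\in\mathcal{P}_{n,d+1}$ with $F(0)=0$, written as $F=\sum_{c=1}^{d+1}F_c$ with $F_c=((F_c)_1,\dots,(F_c)_n)$ homogeneous of degree $c$. Define $\tilde F:\mathbb{C}^n\times\mathbb{C}^{n\times n}\to\mathbb{C}^n\times\mathbb{C}^{n\times n}$, with variables $z^{(1)}=(z^{(1)}_i)_{1\le i\le n}$ and $z^{(2)}=(z^{(2)}_{ij})_{1\le i,j\le n}$, by $$\tilde F^{(1)}_i(z^{(1)},z^{(2)})=\sum_{j=1}^n z^{(2)}_{ij}z^{(1)}_j,\qquad \tilde F^{(2)}_{ij}(z^{(1)},z^{(2)})=z^{(2)}_{ij}-\sum_{c=1}^{d+1}\frac1c\,\frac{\partial (F_c)_i}{\partial z^{(1)}_j}(z^{(1)}).$$ Then $\tilde F\in\mathcal{P}_{n(n+1),d}$; the map $R(z^{(2)};z^{(1)}):=\tilde F^{(2)}(z^{(1)},z^{(2)})$ is, for each $z^{(1)}$, an invertible translation in $z^{(2)}$ with inverse $R^{-1}(y^{(2)};z^{(1)})_{ij}=y^{(2)}_{ij}+\sum_c\frac1c\frac{\partial (F_c)_i}{\partial z^{(1)}_j}(z^{(1)})$; and $$\tilde F^{(1)}\big(z^{(1)},R^{-1}(0;z^{(1)})\big)=F(z^{(1)})\quad\text{for all }z^{(1)}\in\mathbb{C}^n.$$ Consequently $F\in\mathcal{J}^{\rm lin}_{n}$ if and only if $\tilde F\in\mathcal{J}^{\rm lin}_{n(n+1),d;n}$, and $F\in\mathcal{J}_{n}$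 if and only if $\tilde F\in\mathcal{J}_{n(n+1),d;n}$.
   Context: $\mathcal{P}_{m,d}$ is the set of polynomial maps $\mathbb{C}^m\to\mathbb{C}^m$ of total degree $\le d$; $J_F(z)=(\partial F_j/\partial z_i)_{i,j}$. $\mathcal{J}^{\rm lin}_n$: polynomial maps $\mathbb{C}^n\to\mathbb{C}^n$ with $\det J_F$ a nonzero constant; $\mathcal{J}_n$: polynomial maps $\mathbb{C}^n\to\mathbb{C}^n$ that are bijective with polynomial inverse. For $0\le n'\le m$, split $z=(z_1,z_2)\in\mathbb{C}^{n'}\times\mathbb{C}^{m-n'}$, $F=(F_1,F_2)$, $R(z_2;z_1):=F_2(z_1,z_2)$, and when $R(\cdot;z_1)$ is invertible write $R^{-1}(\cdot;z_1)$ for its inverse. $\mathcal{J}^{\rm lin}_{m,d;n'}$ is the set of $F\in\mathcal{P}_{m,d}$ with $R(\cdot;z_1)\in\mathcal{J}_{m-n'}$ for all $z_1$ and $\det J_F(z_1,R^{-1}(0;z_1))=c\in\mathbb{C}^\times$ constant in $z_1$. $\mathcal{J}_{m,d;n'}$ is the set of $F\in\mathcal{P}_{m,d}$ with $R(\cdot;z_1)\in\mathcal{J}_{m-n'}$ for all $z_1$ and such that $F$ restricted to $F^{-1}(\mathbb{C}^{n'}\times\{0\})$ is a bijection onto $\mathbb{C}^{n'}\times\{0\}$ whose inverse $y_1\mapsto F^{-1}(y_1,0)$ is a polynomial map. Here $m=n(n+1)$ and $n'=n$, the first block being $z^{(1)}$ and the second $z^{(2)}$ (identified with $\mathbb{C}^{n^2}$).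 *)

From HB Require Import structures.
From mathcomp Require Import all_boot all_order all_algebra.
Set Implicit Arguments. Unset Strict Implicit. Unset Printing Implicit Defensive.
Import Order.TTheory GRing.Theory Num.Theory.
Local Open Scope ring_scope.

Section MPoly.
Variable C : numClosedFieldType.

Definition mpoly (I : finType) := seq (C * {ffun I -> nat}).

Definition mdeg (I : finType) (e : {ffun I -> nat}) : nat := (\sum_(i : I) e i)%N.

Definition meval (I : finType) (p : mpoly I) (x : I -> C) : C :=
  \sum_(t <- p) t.1 * \prod_(i : I) x i ^+ t.2 i.

Definition mderiv (I : finType) (j : I) (p : mpoly I) : mpoly I :=
  map (fun t : C * {ffun I -> nat} =>
     (t.1 *+ t.2 j, [ffun i => if i == j then (t.2 i).-1 else t.2 i])) p.

Definition mhom (I : finType) (c : nat) (p : mpoly I) : mpoly I :=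
  [seq t <- p | mdeg t.2 == c].

Definition mdeg_le (I : finType) (d : nat) (p : mpoly I) : bool :=
  all (fun t => mdeg t.2 <= d)%N p.

Definition polyfun (I : finType) (f : (I -> C) -> C) : Prop :=
  exists p : mpoly I, forall x, f x = meval p x.
Definition polyfun_le (I : finType) (d : nat) (f : (I -> C) -> C) : Prop :=
  exists p : mpoly I, mdeg_le d p /\ forall x, f x = meval p x.
Definition polymap (I J : finType) (F : (I -> C) -> (J -> C)) : Prop :=
  forall j, polyfun (fun x => F x j).
Definition polymap_le (I : finType) (d : nat) (F : (I -> C) -> (I -> C)) : Prop :=
  forall j, polyfun_le d (fun x => F x j).

Definition is_rep (I : finType) (P : I -> mpoly I) (F : (I -> C) -> (I -> C)) : Prop :=
  forall x j, F x j = meval (P j) x.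

(* det J_F(z), J_F(z) = (dF_j/dz_i)_{i,j}, indices enumerated via enum_val *)
Definition jacdet (I : finType) (P : I -> mpoly I) (z : I -> C) : C :=
  \det (\matrix_(a < #|I|, b < #|I|)
          meval (mderiv (enum_val a) (P (enum_val b))) z).

Definition Jlin (I : finType) (F : (I -> C) -> (I -> C)) : Prop :=
  exists P : I -> mpoly I, is_rep P F /\
    exists c : C, c != 0 /\ forall z, jacdet P z = c.

Definition Jaut (I : finType) (F : (I -> C) -> (I -> C)) : Prop :=
  polymap F /\ exists G : (I -> C) -> (I -> C), polymap G /\
    (forall x v, G (F x) v = x v) /\ (forall y v, F (G y) v = y v).

Definition join (A B : finType) (z1 : A -> C) (z2 : B -> C) : (A + B)%type -> C :=
  fun v => match v with inl a => z1 a | inr b => z2 b end.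

Definition Rmap (A B : finType) (F : ((A + B)%type -> C) -> ((A + B)%type -> C))
  (z1 : A -> C) : (B -> C) -> (B -> C) :=
  fun z2 b => F (join z1 z2) (inr b).

(* J^lin_{m,d;n'} with n' = #|A|, m = #|A| + #|B| *)
Definition Jlin_split (A B : finType) (d : nat)
  (F : ((A + B)%type -> C) -> ((A + B)%type -> C)) : Prop :=
  [/\ polymap_le d F,
      (forall z1, Jaut (Rmap F z1)) &
      exists P, is_rep P F /\ exists c : C, c != 0 /\
        forall z1 z2, (forall b, Rmap F z1 z2 b = 0) -> jacdet P (join z1 z2) = c].

Definition J_split (A B : finType) (d : nat)
  (F : ((A + B)%type -> C) -> ((A + B)%type -> C)) : Prop :=
  [/\ polymap_le d F,
      (forall z1, Jaut (Rmap F z1)) &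
      exists G : (A -> C) -> ((A + B)%type -> C), polymap G /\
        (forall y1 v, F (G y1) v = join y1 (fun _ => 0) v) /\
        (forall z, (forall b, F z (inr b) = 0) ->
           forall v, G (fun a => F z (inl a)) v = z v)].

Definition Tn (n : nat) : finType := ('I_n + 'I_n * 'I_n)%type.

Definition dsum (n d : nat) (P : 'I_n -> mpoly 'I_n) (i j : 'I_n) (z1 : 'I_n -> C) : C :=
  \sum_(1 <= c < d.+2) (c%:R)^-1 * meval (mderiv j (mhom c (P i))) z1.

Definition Ftilde (n d : nat) (P : 'I_n -> mpoly 'I_n) (z : Tn n -> C) : Tn n -> C :=
  fun v => match v with
  | inl i => \sum_(j < n) z (inr (i, j)) * z (inl j)
  | inr (i, j) => z (inr (i, j)) - dsum d P i j (fun k => z (inl k))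
  end.

Definition Rinv (n d : nat) (P : 'I_n -> mpoly 'I_n) (z1 : 'I_n -> C)
  (y2 : ('I_n * 'I_n)%type -> C) : ('I_n * 'I_n)%type -> C :=
  fun ij => y2 ij + dsum d P ij.1 ij.2 z1.

End MPoly.

(* Write G_ij := sum_c 1/c d(F_c)_i/dz_j ([dsum]).  Since F(0) = 0, Euler's
   identity for the homogeneous components gives sum_j z_j G_ij(z) = F_i(z).
   The second block of Ftilde is the translation z2 |-> z2 - G(z1), so the zero
   fibre of Ftilde^(2) is the graph z2 = G(z1), along which Ftilde^(1) is F:
   this transfers bijectivity with polynomial inverse between F and Ftilde
   restricted to the fibre.  On that graph the z2-block of J_Ftilde is the
   identity, so det J_Ftilde is the determinant of the Schur complement, whose
   entries are the d_i F_j obtained by differentiating the Euler identity. *)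
From mathcomp Require Import all_boot all_order all_algebra perm.
From Stdlib Require Import FunctionalExtensionality.
Set Implicit Arguments. Unset Strict Implicit. Unset Printing Implicit Defensive.
Import Order.TTheory GRing.Theory Num.Theory.
Local Open Scope ring_scope.

Lemma poly_horner_inj (R : numDomainType) (p q : {poly R}) :
  (forall t, p.[t] = q.[t]) -> p = q.
Proof.
move=> epq; apply/eqP; rewrite -subr_eq0; apply/eqP.
apply: (@roots_geq_poly_eq0 _ _ [seq i%:R | i <- iota 0 (size (p - q))]).
- by apply/allP => x _; rewrite /root hornerD hornerN epq subrr.
- by rewrite map_inj_uniq ?iota_uniq // => a b /eqP; rewrite eqr_nat => /eqP.
- by rewrite size_map size_iota.
Qed.

Section PartialDerivatives.
Variables (C : numClosedFieldType) (I : finType).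

Definition update (x : I -> C) (j : I) (t : C) : I -> C :=
  fun i => if i == j then t else x i.

(* Being defined on functions, this notion shows that formal
   partial derivatives do not depend on the chosen representation. *)
Definition is_partial (j : I) (f g : (I -> C) -> C) : Prop :=
  forall x, exists q : {poly C},
    (forall t, q.[t] = f (update x j t)) /\ g x = q^`().[x j].

Lemma is_partial_uniq j f g1 g2 :
  is_partial j f g1 -> is_partial j f g2 -> g1 =1 g2.
Proof.
move=> d1 d2 x; have [q1 [e1 ->]] := d1 x; have [q2 [e2 ->]] := d2 x.
by rewrite (@poly_horner_inj _ q1 q2) // => t; rewrite e1 e2.
Qed.

Lemma is_partial_ext j f f' g g' :
  f =1 f' -> g =1 g' -> is_partial j f g -> is_partial j f' g'.
Proof.
move=> ef eg dfg x; have [q [eq dq]] := dfg x.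
by exists q; split => [t|]; rewrite -?ef -?eg.
Qed.

Lemma is_partial_indep j f :
  (forall x t, f (update x j t) = f x) -> is_partial j f (fun _ => 0).
Proof.
move=> fj x; exists (f x)%:P; rewrite derivC horner0.
by split => // t; rewrite hornerC fj.
Qed.

Lemma is_partial_cst j (c : C) : is_partial j (fun _ => c) (fun _ => 0).
Proof. exact: is_partial_indep. Qed.

Lemma is_partial_var j u : is_partial j (fun x => x u) (fun _ => (u == j)%:R).
Proof.
move=> x; case: (eqVneq u j) => [->|nuj].
  by exists 'X; rewrite derivX hornerC; split => // t; rewrite hornerX /update eqxx.
exists (x u)%:P; rewrite derivC horner0; split => // t.
by rewrite hornerC /update (negbTE nuj).
Qed.

Lemma is_partialD j f1 f2 g1 g2 :
  is_partial j f1 g1 -> is_partial j f2 g2 ->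
  is_partial j (fun x => f1 x + f2 x) (fun x => g1 x + g2 x).
Proof.
move=> d1 d2 x; have [q1 [e1 ->]] := d1 x; have [q2 [e2 ->]] := d2 x.
by exists (q1 + q2); rewrite derivD hornerD; split => // t; rewrite hornerD e1 e2.
Qed.

Lemma is_partialM j f1 f2 g1 g2 :
  is_partial j f1 g1 -> is_partial j f2 g2 ->
  is_partial j (fun x => f1 x * f2 x) (fun x => g1 x * f2 x + f1 x * g2 x).
Proof.
move=> d1 d2 x; have [q1 [e1 ->]] := d1 x; have [q2 [e2 ->]] := d2 x.
have update_id : update x j (x j) = x.
  by apply: functional_extensionality => i; rewrite /update; case: eqP => [->|].
exists (q1 * q2); split => [t|]; first by rewrite hornerM e1 e2.
by rewrite derivM hornerD !hornerM e1 e2 update_id.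
Qed.

Lemma is_partialMl j (c : C) f g :
  is_partial j f g -> is_partial j (fun x => c * f x) (fun x => c * g x).
Proof.
move=> dfg; apply: is_partial_ext (is_partialM (is_partial_cst j c) dfg) => // x.
by rewrite mul0r add0r.
Qed.

Lemma is_partial_sum j (T : Type) (r : seq T) (f g : T -> (I -> C) -> C) :
  (forall k, is_partial j (f k) (g k)) ->
  is_partial j (fun x => \sum_(k <- r) f k x) (fun x => \sum_(k <- r) g k x).
Proof.
move=> dfg; elim: r => [|k r IHr].
  by apply: is_partial_ext (is_partial_cst j 0) => x; rewrite big_nil.
by apply: is_partial_ext (is_partialD (dfg k) IHr) => x; rewrite big_cons.
Qed.

Lemma is_partial_monomial j (a : C) (e : {ffun I -> nat}) :
  is_partial j (fun x => a * \prod_i x i ^+ e i)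
    (fun x => a *+ e j * \prod_i x i ^+ [ffun i => if i == j then (e i).-1 else e i] i).
Proof.
move=> x; set rest := \prod_(i | i != j) x i ^+ e i.
have rest_upd t : \prod_(i | i != j) update x j t i ^+ e i = rest.
  by apply: eq_bigr => i /negbTE nij; rewrite /update nij.
have rest_pred : \prod_(i | i != j) x i ^+ [ffun i => if i == j then (e i).-1 else e i] i
    = rest by apply: eq_bigr => i /negbTE nij; rewrite ffunE nij.
exists ((a * rest) *: 'X^(e j)); split => [t|].
  rewrite hornerZ hornerXn (bigD1 j) //= rest_upd /update eqxx.
  by rewrite mulrC mulrA [_ * a]mulrC mulrA.
rewrite derivZ derivXn hornerZ hornerMn hornerXn (bigD1 j) //= rest_pred ffunE eqxx.
by rewrite mulrnAl mulrnAr [_ ^+ _ * rest]mulrC mulrA.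
Qed.

Lemma is_partial_meval j (p : mpoly C I) : is_partial j (meval p) (meval (mderiv j p)).
Proof.
apply: is_partial_ext (is_partial_sum p (fun t => is_partial_monomial j t.1 t.2)) => // x.
by rewrite /meval /mderiv big_map.
Qed.

Lemma meval_mderiv_partial j (p : mpoly C I) f g :
  meval p =1 f -> is_partial j f g -> meval (mderiv j p) =1 g.
Proof. by move=> pf; apply/is_partial_uniq/(is_partial_ext pf _ (is_partial_meval j p)). Qed.

End PartialDerivatives.

Section PolynomialFunctions.
Variables (C : numClosedFieldType) (I : finType).
Implicit Types (f g : (I -> C) -> C) (p q : mpoly C I).

Lemma meval_cons t p x : meval (t :: p) x = t.1 * \prod_i x i ^+ t.2 i + meval p x.
Proof. by rewrite /meval big_cons. Qed.

Lemma meval_cat p q x : meval (p ++ q) x = meval p x + meval q x.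
Proof. by rewrite /meval big_cat. Qed.

Lemma polyfun_ext f g : f =1 g -> polyfun f -> polyfun g.
Proof. by move=> efg [p ep]; exists p => x; rewrite -efg. Qed.

Lemma polyfun_le_ext d f g : f =1 g -> polyfun_le d f -> polyfun_le d g.
Proof. by move=> efg [p [dp ep]]; exists p; split => // x; rewrite -efg. Qed.

Lemma polyfun_le_polyfun d f : polyfun_le d f -> polyfun f.
Proof. by move=> [p [_ ep]]; exists p. Qed.

Lemma polyfun_le_monomial d (e : {ffun I -> nat}) :
  (mdeg e <= d)%N -> polyfun_le d (fun x : I -> C => \prod_i x i ^+ e i).
Proof.
move=> de; exists [:: (1, e)]; rewrite /mdeg_le /= de; split => // x.
by rewrite meval_cons /meval big_nil addr0 mul1r.
Qed.

Lemma polyfun_le_cst d (c : C) : polyfun_le d (fun _ : I -> C => c).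
Proof.
exists [:: (c, [ffun _ => 0%N])]; split.
  by rewrite /mdeg_le /= andbT /mdeg big1 // => i _; rewrite ffunE.
move=> x; rewrite meval_cons /meval big_nil addr0 big1 ?mulr1 // => i _.
by rewrite ffunE expr0.
Qed.

Lemma prod_expr_indicator (x : I -> C) (a : I) : \prod_v x v ^+ (v == a) = x a.
Proof. by rewrite (bigD1 a) //= eqxx big1 ?mulr1 // => v /negbTE ->. Qed.

Lemma sum_indicator (a : I) : (\sum_(v : I) (v == a) = 1)%N.
Proof. by rewrite (bigD1 a) //= eqxx big1 ?addn0 // => v /negbTE ->. Qed.

Lemma polyfun_le_var d (a : I) : (1 <= d)%N -> polyfun_le d (fun x : I -> C => x a).
Proof.
move=> d1; apply: polyfun_le_ext (@polyfun_le_monomial d [ffun v => (v == a : nat)] _).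
  by move=> x; rewrite -[RHS](prod_expr_indicator x a); apply: eq_bigr => v _; rewrite ffunE.
by rewrite /mdeg (eq_bigr (fun v => (v == a : nat))) ?sum_indicator // => v _; rewrite ffunE.
Qed.

Lemma polyfun_le_mul_var d (a b : I) :
  (2 <= d)%N -> polyfun_le d (fun x : I -> C => x a * x b).
Proof.
move=> d2; apply: polyfun_le_ext
  (@polyfun_le_monomial d [ffun v => (v == a) + (v == b)]%N _) => [x|].
  rewrite -(prod_expr_indicator x a) -(prod_expr_indicator x b) -big_split.
  by apply: eq_bigr => v _; rewrite ffunE exprD.
rewrite /mdeg (eq_bigr (fun v => (v == a) + (v == b))%N) => [|v _]; last by rewrite ffunE.
by rewrite big_split /= !sum_indicator.
Qed.

Lemma polyfun_leD d f g :
  polyfun_le d f -> polyfun_le d g -> polyfun_le d (fun x => f x + g x).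
Proof.
move=> [p [dp ep]] [q [dq eq]]; exists (p ++ q); split.
  by move: dp dq; rewrite /mdeg_le all_cat => -> ->.
by move=> x; rewrite meval_cat ep eq.
Qed.

Lemma polyfun_leMl d (c : C) f : polyfun_le d f -> polyfun_le d (fun x => c * f x).
Proof.
move=> [p [dp ep]]; exists [seq (c * t.1, t.2) | t <- p]; rewrite /mdeg_le all_map.
split => // x; rewrite ep /meval big_map mulr_sumr.
by apply: eq_bigr => t _; rewrite mulrA.
Qed.

Lemma polyfun_le_sum d (T : Type) (r : seq T) (f : T -> (I -> C) -> C) :
  (forall k, polyfun_le d (f k)) -> polyfun_le d (fun x => \sum_(k <- r) f k x).
Proof.
move=> df; elim: r => [|k r IHr].
  by apply: polyfun_le_ext (polyfun_le_cst d 0) => x; rewrite big_nil.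
by apply: polyfun_le_ext (polyfun_leD (df k) IHr) => x; rewrite big_cons.
Qed.

Lemma mdeg_mderiv_exp (e : {ffun I -> nat}) l : e l != 0%N ->
  (mdeg [ffun i => if i == l then (e i).-1 else e i]).+1 = mdeg e.
Proof.
move=> el; rewrite /mdeg (bigD1 l) //= [in RHS](bigD1 l) //= ffunE eqxx.
rewrite (eq_bigr e) => [|i /negbTE nil]; last by rewrite ffunE nil.
by rewrite -addSn prednK // lt0n.
Qed.

(* The terms not involving [x l] are differentiated to zero coefficients but
   keep their degree, so they are filtered out of the representation. *)
Lemma polyfun_le_mderiv d q l :
  mdeg_le d.+1 q -> polyfun_le d (meval (mderiv l q)).
Proof.
move=> dq; exists [seq t <- mderiv l q | t.1 != 0]; split.
  rewrite /mdeg_le all_filter /mderiv all_map; apply/allP => t tq /=.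
  apply/implyP => nz; have el : t.2 l != 0%N by apply: contraNneq nz => ->.
  by rewrite -ltnS mdeg_mderiv_exp //; apply: (allP dq).
move=> x; rewrite /meval big_filter [RHS]big_mkcond /=.
by apply: eq_bigr => t _; case: eqP => // ->; rewrite mul0r.
Qed.

Lemma polyfunD f g : polyfun f -> polyfun g -> polyfun (fun x => f x + g x).
Proof. by move=> [p ep] [q eq]; exists (p ++ q) => x; rewrite meval_cat ep eq. Qed.

Lemma polyfun_cst (c : C) : polyfun (fun _ : I -> C => c).
Proof. exact: polyfun_le_polyfun (polyfun_le_cst 0 c). Qed.

Lemma polyfun_var (a : I) : polyfun (fun x : I -> C => x a).
Proof. exact: polyfun_le_polyfun (@polyfun_le_var 1 a isT). Qed.

Lemma polyfunM f g : polyfun f -> polyfun g -> polyfun (fun x => f x * g x).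
Proof.
move=> [p ep] [q eq].
exists [seq (s.1 * t.1, [ffun i => s.2 i + t.2 i]%N)
          | s : C * {ffun I -> nat} <- p, t : C * {ffun I -> nat} <- q] => x.
rewrite ep eq /meval big_allpairs_dep mulr_suml; apply: eq_bigr => s _.
rewrite mulr_sumr; apply: eq_bigr => t _ /=.
under [in RHS]eq_bigr do rewrite ffunE exprD.
by rewrite big_split /= mulrACA.
Qed.

Lemma polyfun_sum (T : Type) (r : seq T) (f : T -> (I -> C) -> C) :
  (forall k, polyfun (f k)) -> polyfun (fun x => \sum_(k <- r) f k x).
Proof.
move=> pf; elim: r => [|k r IHr].
  by apply: polyfun_ext (polyfun_cst 0) => x; rewrite big_nil.
by apply: polyfun_ext (polyfunD (pf k) IHr) => x; rewrite big_cons.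
Qed.

Lemma polyfun_prod (T : Type) (r : seq T) (f : T -> (I -> C) -> C) :
  (forall k, polyfun (f k)) -> polyfun (fun x => \prod_(k <- r) f k x).
Proof.
move=> pf; elim: r => [|k r IHr].
  by apply: polyfun_ext (polyfun_cst 1) => x; rewrite big_nil.
by apply: polyfun_ext (polyfunM (pf k) IHr) => x; rewrite big_cons.
Qed.

Lemma polyfunX f m : polyfun f -> polyfun (fun x => f x ^+ m).
Proof.
move=> pf; elim: m => [|m IHm].
  by apply: polyfun_ext (polyfun_cst 1) => x; rewrite expr0.
by apply: polyfun_ext (polyfunM pf IHm) => x; rewrite exprS.
Qed.

Lemma polyfun_meval_comp (J : finType) (q : mpoly C J) (h : J -> (I -> C) -> C) :
  (forall k, polyfun (h k)) -> polyfun (fun x => meval q (fun k => h k x)).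
Proof.
move=> ph; apply: polyfun_sum => t; apply: polyfunM; first exact: polyfun_cst.
by apply: polyfun_prod => k; apply: polyfunX.
Qed.

End PolynomialFunctions.

Arguments polyfun_var {C I} a.
Arguments polyfun_cst {C I} c.

Section HomogeneousComponents.
Variables (C : numClosedFieldType) (I : finType).
Implicit Types (p : mpoly C I) (z : I -> C).

Lemma euler_monomial (a : C) (e : {ffun I -> nat}) z :
  \sum_l z l * (a *+ e l * \prod_i z i ^+ [ffun i => if i == l then (e i).-1 else e i] i)
  = (mdeg e)%:R * (a * \prod_i z i ^+ e i).
Proof.
rewrite /mdeg natr_sum mulr_suml; apply: eq_bigr => l _.
rewrite (bigD1 l) //= [in RHS](bigD1 l) //= ffunE eqxx.
rewrite (eq_bigr (fun i => z i ^+ e i)) => [|i /negbTE nil]; last by rewrite ffunE nil.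
case: (e l) => [|m] /=; first by rewrite mulr0n !mul0r mulr0.
by rewrite exprS -[a *+ _]mulr_natl mulrCA -mulrA !mulrA.
Qed.

Lemma euler_homogeneous (c : nat) p z : all (fun t => mdeg t.2 == c) p ->
  \sum_l z l * meval (mderiv l p) z = c%:R * meval p z.
Proof.
elim: p => [|t p IHp] /=.
  by move=> _; rewrite /meval big_nil mulr0 big1 // => l _; rewrite mulr0.
case/andP => /eqP tc pc; rewrite /meval /mderiv /= big_cons mulrDr -(IHp pc) -tc.
under eq_bigr do rewrite big_cons mulrDr.
by rewrite big_split /= euler_monomial.
Qed.

Lemma mdeg_le_mhom N c p : mdeg_le N p -> mdeg_le N (mhom c p).
Proof. by move=> /allP dp; apply/allP => t; rewrite mem_filter => /andP[_ /dp]. Qed.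

Lemma meval_sum_mhom N p z : mdeg_le N p -> meval p z = \sum_(c < N.+1) meval (mhom c p) z.
Proof.
elim: p => [|t p IHp] /=.
  by move=> _; rewrite /meval big_nil big1 // => c _; rewrite big_nil.
case/andP; rewrite -ltnS => dt /IHp {}IHp.
have mhom_cons (c : 'I_N.+1) : meval (mhom c (t :: p)) z =
    (if mdeg t.2 == c then t.1 * \prod_i z i ^+ t.2 i else 0) + meval (mhom c p) z.
  by rewrite /mhom /=; case: ifP => _; rewrite ?add0r // meval_cons.
rewrite (eq_bigr _ (fun c _ => mhom_cons c)) big_split /= -IHp meval_cons.
congr (_ + _); rewrite (bigD1 (Ordinal dt)) //= eqxx [X in _ + X]big1 ?addr0 // => c nc.
by case: eqP => // tc; case/eqP: nc; apply: val_inj.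
Qed.

Lemma meval_mhom0 p z : meval (mhom 0 p) z = meval p (fun _ => 0).
Proof.
elim: p => [|t p IHp]; first by rewrite /meval !big_nil.
rewrite meval_cons -IHp /mhom /=.
have [i ti | t0] := pickP (fun i => t.2 i != 0%N).
  have -> : (mdeg t.2 == 0%N) = false.
    by apply/negbTE; rewrite /mdeg sum_nat_eq0; apply/forallP => /(_ i); rewrite (negbTE ti).
  by rewrite (bigD1 i) //= expr0n (negbTE ti) mul0r mulr0 add0r.
have {}t0 i : t.2 i = 0%N by apply/eqP/negbFE/t0.
have -> : mdeg t.2 == 0%N by rewrite /mdeg sum_nat_eq0; apply/forallP => i; rewrite t0.
by rewrite meval_cons; congr (_ * _ + _); apply: eq_bigr => i _; rewrite t0 !expr0.
Qed.

End HomogeneousComponents.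

Section SumOfVariables.
Variables (C : numClosedFieldType) (A B : finType).

Definition inl_exp (e : {ffun A -> nat}) : {ffun (A + B)%type -> nat} :=
  [ffun v => if v is inl a then e a else 0%N].

Lemma mdeg_inl_exp e : mdeg (inl_exp e) = mdeg e.
Proof.
rewrite /mdeg big_sumType /= [X in (_ + X)%N]big1 ?addn0 => [|b _]; last by rewrite ffunE.
by apply: eq_bigr => a _; rewrite ffunE.
Qed.

Lemma prod_inl_exp e (z : (A + B)%type -> C) :
  \prod_v z v ^+ inl_exp e v = \prod_a z (inl a) ^+ e a.
Proof.
rewrite big_sumType /= [X in _ * X]big1 ?mulr1 => [|b _]; last by rewrite ffunE expr0.
by apply: eq_bigr => a _; rewrite ffunE.
Qed.

Lemma polyfun_le_inl d (f : (A -> C) -> C) :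
  polyfun_le d f -> polyfun_le d (fun z : (A + B)%type -> C => f (fun a => z (inl a))).
Proof.
move=> [p [dp ep]]; exists [seq (t.1, inl_exp t.2) | t <- p].
split=> [|z]; first by rewrite /mdeg_le all_map; apply: sub_all dp => t; rewrite /= mdeg_inl_exp.
by rewrite ep /meval big_map; apply: eq_bigr => t _; rewrite prod_inl_exp.
Qed.

Lemma is_partial_inl (a : A) (f g : (A -> C) -> C) :
  is_partial a f g ->
  is_partial (inl a : (A + B)%type)
    (fun z => f (fun k => z (inl k))) (fun z => g (fun k => z (inl k))).
Proof. by move=> dfg z; have [q [eq dq]] := dfg (fun k => z (inl k)); exists q. Qed.

End SumOfVariables.

Section Determinants.
Variable R : comNzRingType.

(* Relabelling rows and columns by the same bijection conjugates the matrix by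
   a permutation matrix, whose two signs cancel. *)
Lemma det_reindex (T : finType) k1 k2 (g1 : 'I_k1 -> T) (g2 : 'I_k2 -> T) (f : T -> T -> R) :
  bijective g1 -> bijective g2 ->
  \det (\matrix_(a, b) f (g1 a) (g1 b)) = \det (\matrix_(a, b) f (g2 a) (g2 b)).
Proof.
move=> g1_bij g2_bij.
have ek : k1 = k2.
  by rewrite -[k1]card_ord -[k2]card_ord (bij_eq_card g1_bij) (bij_eq_card g2_bij).
subst k2; case: g1_bij => h1 g1K h1K.
have inj_h1g2 : injective (h1 \o g2) by apply: inj_comp; [exact: can_inj h1K | exact: bij_inj].
have -> : \matrix_(a, b) f (g2 a) (g2 b) =
    row_perm (perm inj_h1g2) (col_perm (perm inj_h1g2) (\matrix_(a, b) f (g1 a) (g1 b))).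
  by apply/matrixP => a b; rewrite !mxE !permE /= !h1K.
rewrite row_permE col_permE !det_mulmx !det_perm odd_permV.
by rewrite mulrCA -signr_addb addbb mulr1.
Qed.

Lemma det_schur_complement n1 n2 (A : 'M[R]_n1) (B : 'M_(n1, n2)) (D : 'M_(n2, n1)) :
  \det (block_mx A B D 1%:M) = \det (A - B *m D).
Proof.
have -> : block_mx A B D 1%:M = block_mx 1%:M B 0 1%:M *m block_mx (A - B *m D) 0 D 1%:M.
  by rewrite mulmx_block !mul1mx !mul0mx !mulmx1 ?mulmx0 !add0r ?addr0 subrK.
by rewrite det_mulmx det_ublock det_lblock !det_scalar !expr1n !mul1r mulr1.
Qed.

Lemma det_sum_block (A B : finType) (f : (A + B)%type -> (A + B)%type -> R) :
  \det (\matrix_(a < #|{: A + B}|, b < #|{: A + B}|) f (enum_val a) (enum_val b)) =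
  \det (block_mx
    (\matrix_(i < #|A|, j < #|A|) f (inl (enum_val i)) (inl (enum_val j)))
    (\matrix_(i < #|A|, k < #|B|) f (inl (enum_val i)) (inr (enum_val k)))
    (\matrix_(k < #|B|, j < #|A|) f (inr (enum_val k)) (inl (enum_val j)))
    (\matrix_(k < #|B|, l < #|B|) f (inr (enum_val k)) (inr (enum_val l)))).
Proof.
pose g (a : 'I_(#|A| + #|B|)) : (A + B)%type :=
  match split a with inl i => inl (enum_val i) | inr k => inr (enum_val k) end.
have g_bij : bijective g.
  exists (fun v => unsplit (match v with inl i => inl (enum_rank i)
                                        | inr k => inr (enum_rank k) end)).
    by move=> a; rewrite /g -[RHS]splitK; case: (split a) => i; rewrite /= enum_valK.
  by case=> v; rewrite /g unsplitK enum_rankK.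
rewrite (det_reindex f (@enum_val_bij _) g_bij); congr (\det _).
apply/matrixP => a b; rewrite -[a]splitK -[b]splitK /g.
by case: (split a) => i; case: (split b) => j;
  rewrite mxE !unsplitK /= ?block_mxEul ?block_mxEur ?block_mxEdl ?block_mxEdr mxE.
Qed.

End Determinants.

Lemma sum_mul_delta (R : pzSemiRingType) (T : finType) (F : T -> R) (i : T) :
  \sum_j F j * (j == i)%:R = F i.
Proof. by rewrite (bigD1 i) //= eqxx mulr1 big1 ?addr0 // => j /negbTE ->; rewrite mulr0. Qed.

Lemma sum_delta_mul (R : pzSemiRingType) (T : finType) (F : T -> R) (i : T) :
  \sum_j (j == i)%:R * F j = F i.
Proof. by rewrite (bigD1 i) //= eqxx mul1r big1 ?addr0 // => j /negbTE ->; rewrite mul0r. Qed.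

Lemma sum_enum_val_pair (R : nmodType) (A B : finType) (G : A * B -> R) :
  \sum_(k < #|{: A * B}|) G (enum_val k) = \sum_a \sum_b G (a, b).
Proof. by rewrite -(big_enum_val G) pair_big; apply: eq_bigr => -[]. Qed.

Section Construction.
Variables (C : numClosedFieldType) (n d : nat) (P : 'I_n -> mpoly C 'I_n).

Local Notation F := (fun (z : 'I_n -> C) (i : 'I_n) => meval (P i) z).
Local Notation Ft := (Ftilde d P).

Definition fiber0 (z1 : 'I_n -> C) : Tn n -> C := join z1 (Rinv d P z1 (fun _ => 0)).

Lemma Rmap_Rinv z1 y2 ij : Rmap Ft z1 (Rinv d P z1 y2) ij = y2 ij.
Proof. by case: ij => i j; rewrite /Rmap /Ftilde /join /Rinv /= addrK. Qed.

Lemma Rinv_Rmap z1 z2 ij : Rinv d P z1 (Rmap Ft z1 z2) ij = z2 ij.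
Proof. by case: ij => i j; rewrite /Rmap /Ftilde /join /Rinv /= subrK. Qed.

Lemma Jaut_Rmap z1 : Jaut (Rmap Ft z1).
Proof.
split=> [[i j]|].
  by apply: polyfun_ext (polyfunD (polyfun_var (i, j)) (polyfun_cst (- dsum d P i j z1))).
exists (Rinv d P z1); split.
  by move=> [i j]; apply: polyfunD (polyfun_var (i, j)) (polyfun_cst _).
by split=> [z2|y2] ij; rewrite ?Rinv_Rmap ?Rmap_Rinv.
Qed.

Lemma Ftilde_fiber0_inr z1 b : Ft (fiber0 z1) (inr b) = 0.
Proof. exact: (Rmap_Rinv z1 (fun _ => 0) b). Qed.

Lemma fiber0_eq z : (forall b, Ft z (inr b) = 0) -> z = fiber0 (fun k => z (inl k)).
Proof.
move=> z2_0; apply: functional_extensionality => -[a|[i j]] //=.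
move: (z2_0 (i, j)) => /= /eqP; rewrite subr_eq0 => /eqP ->.
by rewrite /Rinv add0r.
Qed.

Lemma polymap_fiber0 (J : finType) (H : (J -> C) -> 'I_n -> C) :
  polymap H -> polymap (fun y => fiber0 (H y)).
Proof.
move=> pH [a | [i j]] /=; first exact: pH.
apply: polyfunD (polyfun_cst 0) (polyfun_sum _ (fun c => polyfunM (polyfun_cst _)
  (polyfun_meval_comp (mderiv j (mhom c (P i))) pH))).
Qed.

Hypothesis P_deg : forall i, mdeg_le d.+1 (P i).
Hypothesis P_0 : forall i, meval (P i) (fun _ => 0) = 0.
Hypothesis d_ge2 : (2 <= d)%N.

Lemma dsum_euler i z1 : \sum_j z1 j * dsum d P i j z1 = meval (P i) z1.
Proof.
transitivity (\sum_(1 <= c < d.+2) meval (mhom c (P i)) z1).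
  under eq_bigr do rewrite /dsum mulr_sumr.
  rewrite exchange_big; apply: eq_big_nat => c /andP[c_gt0 _].
  under eq_bigr do rewrite mulrCA.
  rewrite -mulr_sumr (euler_homogeneous _ (filter_all _ _)) mulrA mulVf ?mul1r //.
  by rewrite pnatr_eq0 -lt0n.
rewrite (meval_sum_mhom _ (P_deg i)) -(big_mkord xpredT (fun c => meval (mhom c (P i)) z1)).
by rewrite big_ltn // meval_mhom0 P_0 add0r.
Qed.

Lemma Ftilde_fiber0_inl z1 i : Ft (fiber0 z1) (inl i) = meval (P i) z1.
Proof. by rewrite -dsum_euler; apply: eq_bigr => j _; rewrite /= /Rinv add0r mulrC. Qed.

Lemma Ftilde_polymap_le : polymap_le d Ft.
Proof.
move=> [i | [i j]] /=.
  by apply: polyfun_le_sum => k; apply: polyfun_le_mul_var.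
have dsum_le : polyfun_le d (fun z : Tn n -> C => dsum d P i j (fun k => z (inl k))).
  apply: polyfun_le_inl; apply: polyfun_le_sum => c; apply: polyfun_leMl.
  by apply: polyfun_le_mderiv; apply: mdeg_le_mhom.
have var_le := @polyfun_le_var C (Tn n) d (inr (i, j)) (ltnW d_ge2).
by apply: polyfun_le_ext (polyfun_leD var_le (polyfun_leMl (-1) dsum_le)) => z; rewrite mulN1r.
Qed.

Definition dsum_deriv (i j l : 'I_n) (z1 : 'I_n -> C) : C :=
  \sum_(1 <= c < d.+2) (c%:R)^-1 * meval (mderiv l (mderiv j (mhom c (P i)))) z1.

Lemma is_partial_dsum i j l : is_partial l (dsum d P i j) (dsum_deriv i j l).
Proof.
exact: is_partial_sum _ (fun c => is_partialMl _ (is_partial_meval l (mderiv j (mhom c (P i))))).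
Qed.

Lemma meval_mderiv_F i l z1 :
  meval (mderiv l (P i)) z1 = dsum d P i l z1 + \sum_j z1 j * dsum_deriv i j l z1.
Proof.
have euler_partial : is_partial l (fun z => \sum_j z j * dsum d P i j z)
    (fun z => dsum d P i l z + \sum_j z j * dsum_deriv i j l z).
  apply: is_partial_ext (is_partial_sum _ (fun j =>
    is_partialM (is_partial_var l j) (is_partial_dsum i j l))) => // z.
  by rewrite big_split /= sum_delta_mul.
by apply: meval_mderiv_partial euler_partial z1 => z; rewrite dsum_euler.
Qed.

Section JacobianOfFtilde.
Variable Pt : Tn n -> mpoly C (Tn n).
Hypothesis Pt_rep : is_rep Pt Ft.

Lemma meval_mderiv_Ft v w g :
  is_partial v (fun z => Ft z w) g -> meval (mderiv v (Pt w)) =1 g.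
Proof. by apply: meval_mderiv_partial => z; rewrite Pt_rep. Qed.

Lemma meval_mderiv_Ft_inl_inl i j :
  meval (mderiv (inl i) (Pt (inl j))) =1 (fun z => z (inr (j, i))).
Proof.
apply: meval_mderiv_Ft; apply: is_partial_ext (is_partial_sum _ (fun l =>
  is_partialM (is_partial_var (inl i) (inr (j, l))) (is_partial_var (inl i) (inl l)))) => // x.
by under eq_bigr do rewrite /= mul0r add0r; rewrite sum_mul_delta.
Qed.

Lemma meval_mderiv_Ft_inr_inl p j :
  meval (mderiv (inr p) (Pt (inl j))) =1 (fun z => (p.1 == j)%:R * z (inl p.2)).
Proof.
case: p => a b; apply: meval_mderiv_Ft.
apply: is_partial_ext (is_partial_sum _ (fun l => is_partialM
  (is_partial_var (inr (a, b)) (inr (j, l))) (is_partial_var (inr (a, b)) (inl l)))) => // x.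
under eq_bigr do rewrite /= mulr0 addr0 (inj_eq inr_inj) xpair_eqE.
rewrite [a == j]eq_sym; case: (j == a) => /=; first by rewrite sum_delta_mul mul1r.
by rewrite mul0r big1 // => l _; rewrite mul0r.
Qed.

Lemma meval_mderiv_Ft_inl_inr i p :
  meval (mderiv (inl i) (Pt (inr p))) =1
  (fun z => - dsum_deriv p.1 p.2 i (fun k => z (inl k))).
Proof.
case: p => a b; apply: meval_mderiv_Ft.
apply: is_partial_ext (is_partialD (is_partial_var (inl i) (inr (a, b)))
  (is_partialMl (-1) (is_partial_inl (is_partial_dsum a b i)))) => x /=.
  by rewrite mulN1r.
by rewrite mulN1r add0r.
Qed.

Lemma meval_mderiv_Ft_inr_inr p q :
  meval (mderiv (inr p) (Pt (inr q))) =1 (fun _ => (q == p)%:R).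
Proof.
case: q => a b; apply: meval_mderiv_Ft.
have dsum_indep : is_partial (inr p)
    (fun z : Tn n -> C => dsum d P a b (fun k => z (inl k))) (fun _ => 0).
  exact: is_partial_indep.
apply: is_partial_ext (is_partialD (is_partial_var (inr p) (inr (a, b)))
  (is_partialMl (-1) dsum_indep)) => x /=; first by rewrite mulN1r.
by rewrite mulr0 addr0.
Qed.

Lemma jacdet_Ftilde_fiber0 (P0 : 'I_n -> mpoly C 'I_n) z1 :
  is_rep P0 F -> jacdet Pt (fiber0 z1) = jacdet P0 z1.
Proof.
move=> P0_rep; rewrite /jacdet.
rewrite (det_sum_block (fun v w => meval (mderiv v (Pt w)) (fiber0 z1))).
have -> : \matrix_(k < #|{: 'I_n * 'I_n}|, l < #|{: 'I_n * 'I_n}|)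
    meval (mderiv (inr (enum_val k)) (Pt (inr (enum_val l)))) (fiber0 z1) = 1%:M.
  by apply/matrixP => k l; rewrite !mxE meval_mderiv_Ft_inr_inr (inj_eq enum_val_inj) eq_sym.
rewrite det_schur_complement; congr (\det _); apply/matrixP => i j; rewrite !mxE.
rewrite (meval_mderiv_partial (fun z => esym (P0_rep z _)) (is_partial_meval _ _)).
rewrite meval_mderiv_F meval_mderiv_Ft_inl_inl /= /Rinv add0r.
under eq_bigr do rewrite !mxE meval_mderiv_Ft_inl_inr meval_mderiv_Ft_inr_inl /=.
rewrite (sum_enum_val_pair (fun p => - dsum_deriv p.1 p.2 (enum_val i) z1 *
  ((p.1 == enum_val j)%:R * z1 p.2))) /=.
under eq_bigr do under eq_bigr do rewrite mulrCA.
under eq_bigr do rewrite -mulr_sumr.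
rewrite sum_delta_mul -sumrN; congr (_ + _); apply: eq_bigr => b _.
by rewrite mulNr opprK mulrC.
Qed.

End JacobianOfFtilde.

Lemma Jlin_Ftilde : Jlin F <-> Jlin_split d Ft.
Proof.
split=> [[P0 [P0_rep [c [c0 jacP0]]]] | [_ _ [Pt [Pt_rep [c [c0 jacPt]]]]]].
  have [Pt Pt_rep] : exists Pt, is_rep Pt Ft.
    have [Pt Pt_poly] := fin_all_exists Ftilde_polymap_le.
    by exists Pt => z w; case: (Pt_poly w) => _; apply.
  split; [exact: Ftilde_polymap_le | exact: Jaut_Rmap |].
  exists Pt; split=> //; exists c; split=> // z1 z2 fib.
  have -> : z2 = Rinv d P z1 (fun _ => 0).
    by apply: functional_extensionality => ij; rewrite -(Rinv_Rmap z1 z2 ij) /Rinv fib.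
  by rewrite (jacdet_Ftilde_fiber0 Pt_rep _ P0_rep).
exists P; split=> //; exists c; split=> // z1.
by rewrite -(jacdet_Ftilde_fiber0 Pt_rep) // jacPt // => b; exact: Rmap_Rinv.
Qed.

Lemma Jaut_Ftilde : Jaut F <-> J_split d Ft.
Proof.
split=> [[_ [H [H_poly [HF FH]]]] | [_ _ [G [G_poly [FG GF]]]]].
  split; [exact: Ftilde_polymap_le | exact: Jaut_Rmap |].
  exists (fun y1 => fiber0 (H y1)); split; first exact: polymap_fiber0.
  split=> [y1 [a|b] | z z2_0 v].
  - by rewrite Ftilde_fiber0_inl FH.
  - exact: Ftilde_fiber0_inr.
  have ez := fiber0_eq z2_0; set z1 := (fun k => z (inl k)) in ez *.
  have -> : (fun a => Ft z (inl a)) = F z1.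
    by apply: functional_extensionality => a; rewrite ez Ftilde_fiber0_inl.
  have -> : H (F z1) = z1 by apply: functional_extensionality => k; exact: HF.
  by rewrite [in RHS]ez.
split; first by move=> i; exists (P i).
exists (fun y a => G y (inl a)); split; first by move=> a; exact: G_poly (inl a).
split=> [x v | y v].
  have Ft_fiber0 : (fun a => Ft (fiber0 x) (inl a)) = F x.
    by apply: functional_extensionality => a; rewrite Ftilde_fiber0_inl.
  by have := GF (fiber0 x) (Ftilde_fiber0_inr x) (inl v); rewrite Ft_fiber0.
have z2_0 b : Ft (G y) (inr b) = 0 by rewrite FG.
by rewrite -Ftilde_fiber0_inl -(fiber0_eq z2_0) FG.
Qed.

End Construction.

Unset Implicit Arguments.
Theorem mainTheorem4 (C : numClosedFieldType) (n d : nat)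
  (hn : (1 <= n)%N) (hd : (2 <= d)%N)
  (P : 'I_n -> mpoly C 'I_n)
  (hP : forall i, mdeg_le d.+1 (P i))
  (h0 : forall i, meval (P i) (fun _ => 0) = 0) :
  let F := fun (z : 'I_n -> C) (i : 'I_n) => meval (P i) z in
  let Ft := Ftilde d P in
  [/\ polymap_le d Ft,
      (forall z1, (forall y2 ij, Rmap Ft z1 (Rinv d P z1 y2) ij = y2 ij) /\
                  (forall z2 ij, Rinv d P z1 (Rmap Ft z1 z2) ij = z2 ij)),
      (forall z1 i, Ft (join z1 (Rinv d P z1 (fun _ => 0))) (inl i) = F z1 i),
      (Jlin F <-> Jlin_split d Ft) &
      (Jaut F <-> J_split d Ft)].
Proof.
move=> F Ft; split.
- exact: Ftilde_polymap_le.
- by move=> z1; split=> *; [exact: Rmap_Rinv | exact: Rinv_Rmap].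
- exact: Ftilde_fiber0_inl.
- exact: Jlin_Ftilde.
- exact: Jaut_Ftilde.
Qed.
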